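(* Let $L$ be a regular zero-one language and $\mathcal{A}_L=\langle Q,A,\cdot,q_0,F\rangle$ its minimal automaton. Then for every subset $P\subseteq Q$, the language $\mathrm{Past}(P)=\{w\in A^*: q_0\cdot w\in P\}$ is also a zero-one language.
   Context: $\mu(L)=\lim_{n\to\infty}|L\cap A^n|/|A|^n$ when it exists; a zero-one language is a regular language $L$ with $\mu(L)$ existing and in $\{0,1\}$. Automata are complete, deterministic, finite, accessible. *)

From HB Require Import structures.
From mathcomp Require Import all_boot all_order all_algebra.
Set Implicit Arguments. Unset Strict Implicit. Unset Printing Implicit Defensive.
Import Order.TTheory GRing.Theory Num.Theory.
Local Open Scope ring_scope.

Record dfa (A : finType) := DFA {
  dstate : finType;
  ddelta : dstate -> A -> dstate;
  dinit  : dstate;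
  dfinal : pred dstate }.

Definition run {A : finType} (D : dfa A) (q : dstate D) (w : seq A) : dstate D :=
  foldl (@ddelta A D) q w.
Arguments run {A} D q w.
Arguments dinit {A} d.

Definition accept {A : finType} (D : dfa A) (w : seq A) : bool :=
  @dfinal A D (run D (dinit D) w).

Definition accessible (A : finType) (D : dfa A) : Prop :=
  forall q : dstate D, exists w : seq A, run D (dinit D) w = q.

Definition recognizes (A : finType) (D : dfa A) (L : pred (seq A)) : Prop :=
  forall w, L w = accept D w.

Definition regular (A : finType) (L : pred (seq A)) : Prop :=
  exists D : dfa A, recognizes D L.

Definition minimal_automaton (A : finType) (D : dfa A) (L : pred (seq A)) : Prop :=
  [/\ accessible D, recognizes D L &
      forall D' : dfa A, recognizes D' L -> (#|dstate D| <= #|dstate D'|)%N ].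

Definition dens (A : finType) (L : pred (seq A)) (n : nat) : rat :=
  (#|[set w : n.-tuple A | L (tval w)]|)%:R / (#|A| ^ n)%:R.

Definition cvgQ (u : nat -> rat) (l : rat) : Prop :=
  forall eps : rat, 0 < eps -> exists N : nat, forall n, (N <= n)%N -> `|u n - l| < eps.

Definition zero_one (A : finType) (L : pred (seq A)) : Prop :=
  regular L /\ (cvgQ (dens L) 0 \/ cvgQ (dens L) 1).

(* Let b be the limit density of L and F the states whose finality is b.  The
   set [always F] of states from which only F-states are reachable is closed,
   and it is reachable from every state: otherwise, from some state every
   reachable state leads outside F within K letters, so the words ending
   outside F would keep density at least 1/(K+1) on some length in every
   window of K+1 consecutive lengths.  Once every state reaches [always F]
   within K letters, the words of length n avoiding it number at most about
   (|A|^K - 1)^(n/K), a vanishing proportion.  Merging [always F] into a single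
   state gives an automaton for L with #|Q| - #|always F| + 1 states, so by
   minimality [always F] is a single state s, and the density of Past(P)
   tends to [P s]. *)
From HB Require Import structures.
From mathcomp Require Import all_boot all_order all_algebra.
From mathcomp Require Import zify lra.
Set Implicit Arguments. Unset Strict Implicit. Unset Printing Implicit Defensive.

Lemma big_tupleS (A : finType) n (f : n.+1.-tuple A -> nat) :
  \sum_(t : n.+1.-tuple A) f t = \sum_(a : A) \sum_(t : n.-tuple A) f [tuple of a :: t].
Proof.
rewrite pair_big /= (reindex (fun p : A * n.-tuple A => [tuple of p.1 :: p.2])) //=.
exists (fun t => (thead t, [tuple of behead t])) => [[a t] _|t _] /=.
  by rewrite theadE; congr pair; apply: val_inj.
by rewrite [RHS]tuple_eta.
Qed.

Lemma fin_uniform_bound (T : finType) (P : T -> nat -> Prop) :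
  (forall x, exists n, P x n) -> exists K, forall x, exists2 n, n <= K & P x n.
Proof.
move=> HP; suff [K HK] : exists K, forall x, x \in enum T -> exists2 n, n <= K & P x n.
  by exists K => x; apply: HK; rewrite mem_enum.
elim: (enum T) => [|y s [K IH]]; first by exists 0.
have [m Pym] := HP y; exists (maxn m K) => x; rewrite inE => /orP[/eqP ->|sx].
  by exists m; rewrite ?leq_maxl.
by have [n nK Pxn] := IH x sx; exists n; rewrite // (leq_trans nK) ?leq_maxr.
Qed.

Definition negligible (a : nat) (f : nat -> nat) : Prop :=
  forall C, 0 < C -> exists T, forall t, T <= t -> f t * C < a ^ t.

Lemma negligible_le (a : nat) (f g : nat -> nat) :
  (forall t, f t <= g t) -> negligible a g -> negligible a f.
Proof.
move=> fg Hg C C0; have [T HT] := Hg C C0; exists T => t /HT.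
by apply: leq_ltn_trans; rewrite leq_mul2r fg orbT.
Qed.

Lemma bernoulli_expn (e j : nat) : e ^ j * (e + j) <= e * (e + 1) ^ j.
Proof.
elim: j => [|j IH]; first by rewrite addn0 expn0 mul1n muln1.
rewrite !expnS; move: IH; set X := e ^ j; set Y := (e + 1) ^ j => IH.
have : (e + 1) * (X * (e + j)) <= (e + 1) * (e * Y) by rewrite leq_mul2l IH orbT.
nia.
Qed.

Lemma negligible_geometric (a K : nat) (f : nat -> nat) : 0 < a -> f 0 <= 1 ->
  (forall n s, f (n + s) <= a ^ s * f n) ->
  (forall n, f (n + K) <= (a ^ K - 1) * f n) ->
  negligible a f.
Proof.
move=> a0 f0 f_grow f_decay C C0; set e := a ^ K - 1.
have eE : e + 1 = a ^ K by rewrite subnK // expn_gt0 a0.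
have f_jK j : f (j * K) <= e ^ j.
  elim: j => [|j IH]; first by rewrite mul0n.
  by rewrite mulSn addnC expnS (leq_trans (f_decay _)) // leq_mul2l IH orbT.
set j := (e * C).+1.
have ejC : e ^ j * C < (e + 1) ^ j.
  have [->|e0] := posnP e; first by rewrite exp0n // mul0n expn_gt0.
  rewrite -(ltn_pmul2l e0) (leq_trans _ (bernoulli_expn e j)) //.
  by rewrite mulnA [e * _]mulnC -mulnA ltn_pmul2l ?expn_gt0 ?e0 // /j; lia.
exists (j * K) => t jKt; rewrite -(subnKC jKt).
apply: leq_ltn_trans (_ : a ^ (t - j * K) * e ^ j * C < _).
  by rewrite leq_mul2r (leq_trans (f_grow _ _)) ?orbT // leq_mul2l f_jK orbT.
by rewrite -mulnA addnC expnD ltn_pmul2l ?expn_gt0 ?a0 // [j * K]mulnC expnM -eE.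
Qed.

Section CountingWords.

Variables (A : finType) (D : dfa A).
Implicit Types (S : pred (dstate D)) (q r : dstate D) (u : seq A).

Fixpoint nwords S (n : nat) q : nat :=
  if n is n'.+1 then \sum_(a : A) nwords S n' (ddelta q a) else S q.

Lemma card_nwords S n q : #|[set w : n.-tuple A | S (run D q w)]| = nwords S n q.
Proof.
rewrite -sum1_card big_mkcond /=.
elim: n q => [|n IH] q /=.
  rewrite (big_pred1 [tuple]) ?inE // => t.
  by symmetry; apply/eqP/val_inj; case: t => [[]].
rewrite big_tupleS; apply: eq_bigr => a _; rewrite -IH.
by apply: eq_bigr => t _; rewrite !inE.
Qed.

Lemma nwordsC S n q : nwords S n q + nwords (predC S) n q = #|A| ^ n.
Proof.
elim: n q => [|n IH] q /=; first by case: (S q).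
by rewrite -big_split expnS -sum_nat_const; apply: eq_bigr => a _; apply: IH.
Qed.

Lemma nwords_sub S S' n q : (forall r, S r -> S' r) -> nwords S n q <= nwords S' n q.
Proof.
move=> SS'; elim: n q => [|n IH] q /=; last by apply: leq_sum => a _; apply: IH.
by case Sq: (S q); rewrite // (SS' q Sq).
Qed.

Lemma eq_nwords S S' n q : S =1 S' -> nwords S n q = nwords S' n q.
Proof. by move=> eqS; apply/eqP; rewrite eqn_leq !nwords_sub // => r; rewrite eqS. Qed.

Lemma nwordsD S k n q :
  nwords S (k + n) q = \sum_r nwords (pred1 r) k q * nwords S n r.
Proof.
elim: k q => [|k IH] q.
  rewrite (bigD1 q) //= eqxx mul1n big1 ?addn0 // => r /negbTE.
  by rewrite eq_sym => ->.
rewrite addSn /= (eq_bigr _ (fun a _ => IH (ddelta q a))) exchange_big /=.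
by apply: eq_bigr => r _; rewrite big_distrl.
Qed.

Lemma nwords_pred1 S n q : nwords S n q = \sum_r nwords (pred1 r) n q * S r.
Proof. by have := nwordsD S n 0 q; rewrite addn0. Qed.

Lemma nwords_gt0 S q u : S (run D q u) -> 0 < nwords S (size u) q.
Proof.
elim: u q => [|a u IH] q /= Su; first by rewrite Su.
by rewrite (bigD1 a) //= ltn_addr ?IH.
Qed.

Lemma nwords_gt0P S n q : 0 < nwords S n q -> exists2 u, size u = n & S (run D q u).
Proof.
elim: n q => [|n IH] q /=; first by case Sq: (S q) => // _; exists [::].
rewrite lt0n sum_nat_eq0 negb_forall => /existsP[a]; rewrite -lt0n => /IH[u <- Su].
by exists (a :: u).
Qed.

Lemma nwords_run_le S q u n : nwords S n (run D q u) <= nwords S (size u + n) q.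
Proof.
rewrite nwordsD (bigD1 (run D q u)) //= (leq_trans _ (leq_addr _ _)) //.
by rewrite leq_pmull // nwords_gt0 /=.
Qed.

Definition dfa_closed S := forall r a, S r -> S (ddelta r a).

Lemma dfa_closed_run S q u : dfa_closed S -> S q -> S (run D q u).
Proof. by move=> clS; elim: u q => [|a u IH] q //= Sq; apply/IH/clS. Qed.

Lemma nwords_closed S n q : dfa_closed S -> S q -> nwords (predC S) n q = 0.
Proof.
move=> clS; elim: n q => [|n IH] q /= Sq; first by rewrite Sq.
by rewrite big1 // => a _; apply/IH/clS.
Qed.

Lemma nwordsT n q : nwords predT n q = #|A| ^ n.
Proof. by rewrite -(nwordsC predT n q) (@nwords_closed predT) ?addn0. Qed.

(* Every S-avoiding word of length n + s is an S-avoiding word of length n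
   followed by one of the at most c continuations from a state outside S. *)
Lemma nwords_closed_step S s c n q : dfa_closed S ->
  (forall r, ~~ S r -> nwords (predC S) s r <= c) ->
  nwords (predC S) (n + s) q <= c * nwords (predC S) n q.
Proof.
move=> clS Sc; rewrite nwordsD [nwords _ n q]nwords_pred1 big_distrr /=.
apply: leq_sum => r _; rewrite mulnCA leq_mul2l; apply/orP; right.
case Sr: (S r) => /=; first by rewrite muln0 nwords_closed.
by rewrite muln1 Sc ?Sr.
Qed.

Definition dstep : rel (dstate D) := fun q r => [exists a, ddelta q a == r].

Lemma connect_run q u : connect dstep q (run D q u).
Proof.
elim: u q => [|a u IH] q; first exact: connect0.
by apply: connect_trans (IH _); apply: connect1; apply/existsP; exists a.
Qed.

Lemma connect_runP q r : connect dstep q r -> exists u, run D q u = r.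
Proof.
move/connectP=> [p qp ->]; elim: p q qp => [|x p IH] q /=; first by exists [::].
by move=> /andP[/existsP[a /eqP qa] /IH[u <-]]; exists (a :: u); rewrite /= qa.
Qed.

Definition always (F : pred (dstate D)) : pred (dstate D) :=
  [pred q | [forall r, connect dstep q r ==> F r]].

Lemma always_closed F : dfa_closed (always F).
Proof.
move=> r a /forallP Fr; apply/forallP => x; apply/implyP => rx.
by apply: (implyP (Fr x)); apply: connect_trans rx; apply/connect1/existsP; exists a.
Qed.

Lemma always_sub F : {subset always F <= F}.
Proof. by move=> r /forallP /(_ r) /implyP; apply; apply: connect0. Qed.

(* Each word of length n read from q extends by at most K letters to a word
   ending outside F. *)
Lemma window_nwords F q K n :
  (forall r, connect dstep q r -> exists2 j, j <= K & 0 < nwords (predC F) j r) ->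
  #|A| ^ n <= \sum_(j < K.+1) nwords (predC F) (n + j) q.
Proof.
move=> qF; under eq_bigr do rewrite nwordsD.
rewrite exchange_big /= -(nwordsT n q) nwords_pred1.
apply: leq_sum => r _; rewrite -big_distrr /= leq_mul2l.
have [//|/nwords_gt0P[u _ /eqP qur]] := posnP (nwords (pred1 r) n q).
have [j jK Fj] : exists2 j, j <= K & 0 < nwords (predC F) j r.
  by apply: qF; rewrite -qur connect_run.
by rewrite (bigD1 (Ordinal (jK : j < K.+1))) //= ltn_addr.
Qed.

Lemma window_not_negligible F q K : 0 < #|A| -> (exists u, run D (dinit D) u = q) ->
  (forall r, connect dstep q r -> exists2 j, j <= K & 0 < nwords (predC F) j r) ->
  ~ negligible #|A| (fun t => nwords (predC F) t (dinit D)).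
Proof.
move=> A0 [u0 u0q] qF Fneg; set a := #|A|; set k := size u0.
set C := K.+1 * a ^ (k + K).
have [|T HT] := Fneg C; first by rewrite muln_gt0 expn_gt0 A0.
have bound_j (j : 'I_K.+1) : nwords (predC F) (T + j) q * C < a ^ (k + T + K).
  apply: leq_ltn_trans (_ : _ <= nwords (predC F) (k + (T + j)) (dinit D) * C) _.
    by rewrite leq_mul2r -u0q nwords_run_le orbT.
  apply: leq_trans (HT _ (leq_trans (leq_addr j T) (leq_addl k _))) _.
  by rewrite leq_pexp2l // -addnA !leq_add2l -ltnS.
have : \sum_(j < K.+1) (nwords (predC F) (T + j) q * C).+1
       <= \sum_(j < K.+1) a ^ (k + T + K) by apply: leq_sum => j _; apply: bound_j.
under eq_bigr do rewrite -addn1.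
rewrite big_split sum_nat_const card_ord /= sum_nat_const card_ord -big_distrl /=.
move/(leq_trans (leq_add (leq_mul (window_nwords T qF) (leqnn C)) (leqnn _))).
have -> : a ^ T * C = K.+1 * a ^ (k + T + K).
  by rewrite mulnCA -expnD; congr (_ * _ ^ _); lia.
lia.
Qed.

Lemma always_reachable F : 0 < #|A| -> accessible D ->
  negligible #|A| (fun t => nwords (predC F) t (dinit D)) ->
  forall q, exists u, always F (run D q u).
Proof.
move=> A0 accD Fneg q.
have [/existsP[r /andP[/connect_runP[u <-] Fu]]|noF] :=
  boolP [exists r, connect dstep q r && always F r]; first by exists u.
have Fout x : exists n, connect dstep q x -> 0 < nwords (predC F) n x.
  have [qx|] := boolP (connect dstep q x); last by exists 0.
  have : ~~ always F x by apply: contra noF => Fx; apply/existsP; exists x; rewrite qx.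
  rewrite /= negb_forall => /existsP[y]; rewrite negb_imply => /andP[/connect_runP[w <-] Fy].
  by exists (size w) => _; apply: nwords_gt0.
have [K HK] := fin_uniform_bound Fout.
case: (@window_not_negligible F q K A0 (accD q) _ Fneg) => r qr.
by have [j jK /(_ qr)] := HK r; exists j.
Qed.

Lemma negligible_not_always F : 0 < #|A| ->
  (forall q, exists u, always F (run D q u)) ->
  negligible #|A| (fun t => nwords (predC (always F)) t (dinit D)).
Proof.
move=> A0 Freach; have /card_gt0P[a0 _] := A0.
have [K HK] : exists K, forall q,
    exists2 n, n <= K & exists2 u, size u = n & always F (run D q u).
  by apply: fin_uniform_bound => q; have [u Fu] := Freach q; exists (size u), u.
have always_K r : 0 < nwords (always F) K r.
  have [n nK [u un Fu]] := HK r.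
  have -> : K = size (u ++ nseq (K - n) a0) by rewrite size_cat size_nseq un subnKC.
  by apply: nwords_gt0; rewrite /run foldl_cat; apply/dfa_closed_run/Fu/always_closed.
apply: (@negligible_geometric _ K) A0 _ _ _; first by rewrite leq_b1.
  move=> n s; apply: nwords_closed_step (@always_closed F) _ => r _.
  by rewrite -(nwordsC (always F) s r) leq_addl.
move=> n; apply: nwords_closed_step (@always_closed F) _ => r _.
by have := nwordsC (always F) K r; have := always_K r; lia.
Qed.

End CountingWords.

Section MergeClosedStates.

Variables (A : finType) (D : dfa A) (U : pred (dstate D)) (b : bool).
Hypotheses (clU : dfa_closed U) (finalU : forall q, U q -> dfinal q = b).

(* [None] stands for the whole of U. *)
Definition merge_closed : dfa A :=
  @DFA A (option {q : dstate D | ~~ U q})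
    (fun o a => if o is Some q then insub (ddelta (val q) a) else None)
    (insub (dinit D))
    (fun o => if o is Some q then dfinal (val q) else b).

Lemma run_merge_closed q w : run merge_closed (insub q) w = insub (run D q w).
Proof.
elim: w q => [|a w IH] q //=.
have [Uq|nUq] := boolP (U q); last by rewrite (insubT [pred x | ~~ U x] nUq) /= IH.
rewrite insubF ?Uq // insubF; last by rewrite dfa_closed_run // clU.
by elim: w {IH}.
Qed.

Lemma card_merge_closed : #|dstate merge_closed| = #|[predC U]|.+1.
Proof. by rewrite /= card_option card_sig. Qed.

Lemma merge_closed_recognizes L : recognizes D L -> recognizes merge_closed L.
Proof.
move=> recD w; rewrite recD /accept run_merge_closed /=.
by case: insubP => [q _ ->|/negbNE/finalU].
Qed.

Lemma card_closed_le1 L : minimal_automaton D L -> #|U| <= 1.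
Proof.
case=> _ recD minD; have := minD _ (merge_closed_recognizes recD).
by rewrite card_merge_closed -(cardC U); lia.
Qed.

End MergeClosedStates.

Section Densities.

Import Order.TTheory GRing.Theory Num.Theory.
Local Open Scope ring_scope.

Lemma eq_cvgQ (u v : nat -> rat) (l m : rat) :
  (forall t, `|u t - l| = `|v t - m|) -> cvgQ v m -> cvgQ u l.
Proof.
by move=> uv Hv eps eps0; have [N HN] := Hv eps eps0; exists N => n /HN; rewrite uv.
Qed.

Lemma cvgQ_compl (u v : nat -> rat) :
  (forall t, u t + v t = 1) -> cvgQ u 1 <-> cvgQ v 0.
Proof.
move=> uv1; have uv t : `|u t - 1| = `|v t - 0|.
  by rewrite -(uv1 t) subr0 -normrN opprB addrC addKr.
by split; apply: eq_cvgQ.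
Qed.

Lemma negligible_cvgQ0 (a : nat) (f : nat -> nat) : (0 < a)%N ->
  negligible a f <-> cvgQ (fun t => (f t)%:R / (a ^ t)%:R) 0.
Proof.
move=> a0; have at0 t : (0 : rat) < (a ^ t)%:R by rewrite ltr0n expn_gt0 a0.
split=> [fneg eps eps0|fcvg C C0].
  pose C := (Num.Def.archi_bound eps^-1).+1.
  have epsC : 1 < eps * C%:R.
    rewrite -ltr_pdivrMl // mulr1 (lt_le_trans (archi_boundP _)) ?ler_nat //.
    by rewrite invr_ge0 ltW.
  have [T HT] := fneg C isT; exists T => t /HT; rewrite -(ltr_nat rat) natrM subr0.
  rewrite ger0_norm ?divr_ge0 // ltr_pdivrMr //.
  have := ler0n rat (f t); move: (f t)%:R (a ^ t)%:R (at0 t) => x y y0 x0; nra.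
have [|T HT] := fcvg C%:R^-1; first by rewrite invr_gt0 ltr0n.
exists T => t /HT; rewrite subr0 ger0_norm ?divr_ge0 // ltr_pdivrMr //.
by rewrite mulrC ltr_pdivlMr ?ltr0n // -natrM ltr_nat.
Qed.

Lemma dens_run (A : finType) (D : dfa A) (S : pred (dstate D)) n :
  dens (fun w => S (run D (dinit D) w)) n
  = (nwords S n (dinit D))%:R / (#|A| ^ n)%:R.
Proof. by rewrite /dens card_nwords. Qed.

Lemma dens_runC (A : finType) (D : dfa A) (S : pred (dstate D)) : (0 < #|A|)%N ->
  forall n, dens (fun w => S (run D (dinit D) w)) n
            + dens (fun w => predC S (run D (dinit D) w)) n = 1.
Proof.
move=> A0 n; rewrite !dens_run -mulrDl -natrD nwordsC divff //.
by rewrite pnatr_eq0 -lt0n expn_gt0 A0.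
Qed.

Lemma zero_one_negligible (A : finType) (L : pred (seq A)) (D : dfa A) :
  (0 < #|A|)%N -> zero_one L -> recognizes D L ->
  exists b : bool,
    negligible #|A| (fun t => nwords (predC [pred q | dfinal q == b]) t (dinit D)).
Proof.
move=> A0 [_ Lcvg] recD.
have accE : dens L =1 dens (fun w => dfinal (run D (dinit D) w)).
  by move=> n; rewrite /dens; congr (_%:R / _); apply: eq_card => w; rewrite !inE recD.
case: Lcvg => [L0|L1]; [exists false | exists true]; apply/negligible_cvgQ0 => //.
  apply: eq_cvgQ L0 => t; rewrite accE dens_run.
  by congr `|_%:R / _ - _|; apply: eq_nwords => q /=; case: dfinal.
apply: (cvgQ_compl _).1 L1 => t; rewrite accE -[RHS](dens_runC (@dfinal A D) A0 t); congr (_ + _).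
by rewrite dens_run; congr (_%:R / _); apply: eq_nwords => q /=; case: dfinal.
Qed.

Lemma dens_run_cvg (A : finType) (D : dfa A) (P : pred (dstate D)) (s : dstate D) :
  (0 < #|A|)%N -> negligible #|A| (fun t => nwords (predC (pred1 s)) t (dinit D)) ->
  cvgQ (dens (fun w => P (run D (dinit D) w))) (P s)%:R.
Proof.
move=> A0 sneg.
have dens0 (S : pred (dstate D)) : ~~ S s -> cvgQ (dens (fun w => S (run D (dinit D) w))) 0.
  move=> nSs; apply: (@eq_cvgQ _ (fun t => (nwords S t (dinit D))%:R / (#|A| ^ t)%:R)).
    by move=> t; rewrite dens_run.
  apply/negligible_cvgQ0/(negligible_le _ sneg) => // t.
  by apply: nwords_sub => q Sq /=; apply: contraNneq nSs => <-.
case Ps: (P s); last by apply: dens0; rewrite Ps.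
by apply: (cvgQ_compl (dens_runC P A0)).2 (dens0 (predC P) _); rewrite /= Ps.
Qed.

End Densities.

Theorem lemma6 (A : finType) (hA : (0 < #|A|)%N) (L : pred (seq A)) (D : dfa A)
  (hL : zero_one L) (hD : minimal_automaton D L) (P : pred (dstate D)) :
  zero_one (fun w : seq A => P (run D (dinit D) w)).
Proof.
have [accD recD _] := hD.
split; first by exists (@DFA A (dstate D) (@ddelta A D) (dinit D) P).
have [b Fneg] := zero_one_negligible hA hL recD.
set F := [pred q | dfinal q == b] in Fneg.
have Freach := always_reachable hA accD Fneg.
have [u Fs] := Freach (dinit D); set s := run D (dinit D) u in Fs.
have always_s : {subset always F <= pred1 s}.
  have /card_le1_eqP le1 : (#|always F| <= 1)%N.
    apply: (card_closed_le1 (b := b) (@always_closed _ _ F) _ hD).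
    by move=> q /always_sub /eqP.
  by move=> q Fq; apply/eqP/le1.
have sneg : negligible #|A| (fun t => nwords (predC (pred1 s)) t (dinit D)).
  apply: negligible_le (negligible_not_always hA Freach) => t.
  by apply: nwords_sub => q; apply: contra (always_s q).
by have := dens_run_cvg P hA sneg; case: (P s); [right | left].
Qed.
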